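(* Let $r\ge2$ divide $[K:F]_{\rm i}$ (so $r$ is a power of $p$ and $t^{1/r}\in K$). Let $\mathcal{C}':A\to K\{\tau\}$ be the $\mathbb{F}_q$-algebra homomorphism with $\mathcal{C}'_t=t^{1/r}+\tau$. For $a=\sum_n x_nt^n\in A$ ($x_n\in\mathbb{F}_q$) put $\hat a=\sum_n x_n^{1/r}t^n\in A$, and for $\mu=\sum_i c_i\tau^i\in K\{\tau\}$ put ${}^{(r)}\mu=\sum_i c_i^r\tau^i$. Then: (1) ${}^{(r)}\mathcal{C}'_{\hat a}=\mathcal{C}_a$ for every $a\in A$; (2) for every $a\in A$ and every $\lambda\in K^{\rm sep}$ with $\mathcal{C}'_{\hat a}(\lambda)=0$, there is a unique $\delta\in K^{\rm sep}$ with $\mathcal{C}_a(\delta)=0$ and $\lambda=\delta^{1/r}$ (i.e. $\lambda^r=\delta$).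
   Context: $p$ prime, $q$ a power of $p$, $A=\mathbb{F}_q[t]$, $F=\mathbb{F}_q(t)$, $K$ a finite extension of $F$, $K_{\rm s}$ the separable closure of $F$ in $K$, $[K:F]_{\rm i}=[K:K_{\rm s}]$. $K\{\tau\}$ is the twisted polynomial ring with $\tau c=c^q\tau$; its elements act on $K^{\rm sep}$ with $\tau$ acting as the $q$-th power map. The Carlitz module $\mathcal{C}:A\to K\{\tau\}$ is the $\mathbb{F}_q$-algebra homomorphism with $\mathcal{C}_t=t+\tau$. *)

From HB Require Import structures.
From mathcomp Require Import all_boot all_order all_algebra all_field.
Set Implicit Arguments. Unset Strict Implicit. Unset Printing Implicit Defensive.
Import Order.TTheory GRing.Theory.
Local Open Scope ring_scope.

(* F = F_q(t) is the fraction field of A = F_q[t] = {poly Fq}; q = #|Fq|. *)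
Notation FF Fq := {fraction {poly Fq}}.

Section Defs.
Variable Fq : finFieldType.
Local Notation q := #|Fq|.
Variable K : fieldExtType (FF Fq).

Definition cK (c : Fq) : K := (FracField.tofrac c%:P)%:A.
Definition tK : K := (FracField.tofrac ('X : {poly Fq}))%:A.

(* Twisted polynomials K{tau}: an element sum_i c_i tau^i is represented by
   its coefficient sequence, stored as a {poly K}; the ring structure used
   is the twisted one below (tau c = c^q tau), NOT the one of {poly K}. *)
Definition tmul (f g : {poly K}) : {poly K} :=
  \poly_(k < (size f + size g).-1)
     \sum_(i < k.+1) f`_i * (g`_(k - i)) ^+ (q ^ i).
Definition tpow (f : {poly K}) (n : nat) : {poly K} := iter n (tmul f) 1.
Definition tau : {poly K} := 'X.

Definition drin (phit : {poly K}) (a : {poly Fq}) : {poly K} :=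
  \sum_(n < size a) cK a`_n *: tpow phit n.

Definition Carlitz : {poly Fq} -> {poly K} := drin (tK%:P + tau).

Definition twist (r : nat) (mu : {poly K}) : {poly K} :=
  map_poly (fun c => c ^+ r) mu.

Definition teval (L : fieldType) (iota : {rmorphism K -> L})
    (mu : {poly K}) (x : L) : L :=
  \sum_(i < size mu) iota mu`_i * x ^+ (q ^ i).

Definition is_separable_closure (L : fieldType) (iota : {rmorphism K -> L}) :=
  (forall x : L, exists P : {poly K},
      [/\ P != 0, separable_poly P & root (map_poly iota P) x]) /\
  (forall P : {poly L}, (1 < size P)%N -> separable_poly P ->
      exists x, root P x).
End Defs.

(* x^{1/r} in F_q: the (unique, for r a power of p) y with y^r = x *)
Definition froot (Fq : finFieldType) (r : nat) (x : Fq) : Fq :=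
  odflt x [pick y : Fq | y ^+ r == x].

Definition hat (Fq : finFieldType) (r : nat) (a : {poly Fq}) : {poly Fq} :=
  \poly_(i < size a) froot r a`_i.

From Pilot Require Import Defs.
From HB Require Import structures.
From mathcomp Require Import all_boot all_order all_algebra all_field.
Import GRing.Theory.
Local Open Scope ring_scope.

Set Implicit Arguments. Unset Strict Implicit. Unset Printing Implicit Defensive.

(* Write E^p[s] for the ring of values at s of polynomials whose coefficients
   are p-th powers of elements of E.  Since F_q is perfect, F = F^p[t], and the
   separable closure K_s of F in K satisfies K_s = K_s^p[t] because every
   separable y lies in F(y^p).  If E = E^p[s] and some x outside E has x^p in E,
   reducing x^p in E^p[s] modulo X^p - s gives a nonzero polynomial of degree
   < p with p-th power coefficients vanishing at s; its gcd with X^p - s maps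
   under Frobenius to a divisor of (X - s)^p, which forces s = u^p with u
   outside E, and then E(u) = E(u)^p[u] has degree p over E.  Climbing the
   purely inseparable extension K/K_s this way gives [K : K_s] = p^J together
   with an element of K whose p^J-th power is t, so t^(1/r) is in K whenever
   r divides p^J.  The two identities are formal: c |-> c^r is a ring
   endomorphism of K, so twisting commutes with the product of K{tau}; and
   lam^r is the only candidate for delta. *)

Lemma expr_bezout (F : fieldType) (x : F) (k p : nat) :
  (0 < k)%N -> coprime k p -> exists a b : nat, x = (x ^+ k) ^+ a / (x ^+ p) ^+ b.
Proof.
move=> k_gt0 co_kp; have [b _] := Bezoutl p k_gt0.
rewrite (eqP co_kp) => /dvdnP[a Dak]; exists a, b.
rewrite -!exprM [(k * a)%N]mulnC -Dak exprD expr1 [(p * b)%N]mulnC.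
have [->|x_neq0] := eqVneq x 0; first by rewrite !mul0r.
by rewrite mulfK // expf_neq0.
Qed.

Lemma eqp_exp_XsubC_coef0 (F : fieldType) (q : {poly F}) (u : F) (k : nat) :
  q %= ('X - u%:P) ^+ k -> (- u) ^+ k = q`_0 / lead_coef q.
Proof.
move=> Dq; have := eqp_eq Dq.
have /monicP -> : ('X - u%:P) ^+ k \is monic by rewrite monic_exp ?monicXsubC.
rewrite scale1r => Dq'; rewrite {1}Dq' coefZ mulrC mulKf; last first.
  by rewrite lead_coef_eq0 -size_poly_eq0 (eqp_size Dq) size_exp_XsubC.
by rewrite -horner_coef0 horner_exp hornerXsubC sub0r.
Qed.

Section Frobenius.
Variables (K : fieldType) (p : nat) (Hp : p \in [pchar K]).
Local Notation frob := (pFrobenius_aut Hp).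

Let p_pr : prime p := pcharf_prime Hp.

Lemma map_Frobenius_XnsubC (s : K) : map_poly frob ('X^p - s%:P) = ('X - s%:P) ^+ p.
Proof.
have Hp_poly : p \in [pchar {poly K}] := rmorph_pchar polyC Hp.
rewrite rmorphB /= map_polyXn map_polyC /= pFrobenius_autE polyC_exp.
by rewrite -!(pFrobenius_autE Hp_poly) -rmorphB.
Qed.

Lemma pth_root_of_Frobenius_root (g : {poly K}) (s : K) :
  g != 0 -> (size g <= p)%N -> root (map_poly frob g) s -> exists w, w ^+ p = s.
Proof.
move=> nz_g le_g_p gs0; set d := gcdp g ('X^p - s%:P).
have : map_poly frob d %| ('X - s%:P) ^+ p.
  by rewrite gcdp_map map_Frobenius_XnsubC dvdp_gcdr.
case/dvdp_exp_XsubCP => k le_k_p Dd.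
have k_gt0 : (0 < k)%N.
  have := eqp_root Dd s; rewrite gcdp_map root_gcd gs0 map_Frobenius_XnsubC.
  rewrite -(prednK (prime_gt0 p_pr)) root_exp_XsubC eqxx.
  by case: k {Dd le_k_p} => //; rewrite expr0 (negbTE (root1 _)).
have k_lt_p : (k < p)%N.
  rewrite -ltnS -(size_exp_XsubC k s) -(eqp_size Dd) size_map_poly ltnS.
  by rewrite (leq_trans _ le_g_p) // dvdp_leq // dvdp_gcdl.
have co_kp : coprime k p by rewrite coprime_sym prime_coprime // gtnNdvd.
have := eqp_exp_XsubC_coef0 Dd; rewrite coef_map lead_coef_map -fmorph_div /=.
set c := d`_0 / lead_coef d; rewrite pFrobenius_autE => Dsk.
have [a [b Ds]] := expr_bezout (- s) k_gt0 co_kp.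
exists (- (c ^+ a / (- s) ^+ b)).
rewrite exprNn_pchar ?pnatE // exprMn exprVn -!exprM mulnC exprM -Dsk.
by rewrite mulnC exprM -Ds opprK.
Qed.
End Frobenius.

Section PurelyInseparable.
Variables (F0 : fieldType) (K : fieldExtType F0) (p : nat) (Hp : p \in [pchar K]).
Local Notation frob := (pFrobenius_aut Hp).

Let p_pr : prime p := pcharf_prime Hp.

Lemma adjoin_degree_pchar (E : {subfield K}) (u : K) :
  u \notin E -> u ^+ p \in E -> adjoin_degree E u = p.
Proof.
move=> uE upE.
have : minPoly E u %| ('X - u%:P) ^+ p.
  rewrite -(map_Frobenius_XnsubC Hp) rmorphB /= map_polyXn map_polyC /= pFrobenius_autE.
  by rewrite minPoly_dvdp ?rpredB ?rpredX ?polyOverX ?polyOverC // /root !hornerE subrr.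
case/dvdp_exp_XsubCP => k le_k_p Dm.
have Dk : adjoin_degree E u = k.
  by apply: succn_inj; rewrite -size_minPoly (eqp_size Dm) size_exp_XsubC.
rewrite Dk; apply/eqP; rewrite eqn_leq le_k_p leqNgt; apply/negP => lt_k_p.
have k_gt0 : (0 < k)%N.
  have := eqp_root Dm u; rewrite {1}/root minPolyxx eqxx.
  by case: k {Dk Dm le_k_p lt_k_p} => //; rewrite expr0 (negbTE (root1 _)).
have co_kp : coprime k p by rewrite coprime_sym prime_coprime // gtnNdvd.
have ukE : (- u) ^+ k \in E.
  rewrite (eqp_exp_XsubC_coef0 Dm) (monicP (monic_minPoly E u)) divr1.
  exact: polyOverP (minPolyOver E u) 0%N.
have upE' : (- u) ^+ p \in E by rewrite exprNn_pchar ?pnatE // rpredN.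
have [a [b Du]] := expr_bezout (- u) k_gt0 co_kp.
move: uE; rewrite -rpredN Du => /negP; apply.
by rewrite rpredM ?memvV // rpredX.
Qed.

Definition in_pring (E : {vspace K}) (s y : K) :=
  exists2 q : {poly K}, q \is a polyOver E & y = (map_poly frob q).[s].

Definition pgenerator (E : {vspace K}) (s : K) := {in E, forall y, in_pring E s y}.

Section Pring.
Variables (E : {subfield K}) (s : K).

Lemma in_pringD y z : in_pring E s y -> in_pring E s z -> in_pring E s (y + z).
Proof.
move=> [a aE ->] [b bE ->]; exists (a + b); first exact: rpredD.
by rewrite rmorphD hornerD.
Qed.

Lemma in_pringM y z : in_pring E s y -> in_pring E s z -> in_pring E s (y * z).
Proof.
move=> [a aE ->] [b bE ->]; exists (a * b); first exact: rpredM.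
by rewrite rmorphM hornerM.
Qed.

Lemma in_pring_Frobenius e : e \in E -> in_pring E s (e ^+ p).
Proof.
by move=> eE; exists e%:P; rewrite ?polyOverC // map_polyC hornerC.
Qed.

Lemma in_pring_gen : in_pring E s s.
Proof. by exists 'X; rewrite ?polyOverX // map_polyX hornerX. Qed.

Lemma in_pringX y n : in_pring E s y -> in_pring E s (y ^+ n).
Proof.
move=> Ey; elim: n => [|n IHn]; last by rewrite exprS; apply: in_pringM.
by have := in_pring_Frobenius (rpred1 E); rewrite expr1n expr0.
Qed.

Lemma in_pring_sum I (r : seq I) (P : pred I) (f : I -> K) :
  (forall i, P i -> in_pring E s (f i)) -> in_pring E s (\sum_(i <- r | P i) f i).
Proof.
move=> Ef; elim/big_ind: _ => //; last exact: in_pringD.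
by have := in_pring_Frobenius (rpred0 E); rewrite expr0n gtn_eqF ?prime_gt0.
Qed.

Hypothesis sE : s \in E.

Lemma in_pring_mem y : in_pring E s y -> y \in E.
Proof.
move=> [q qE ->]; apply: rpred_horner => //; apply/polyOverP => i.
by rewrite coef_map /= pFrobenius_autE rpredX ?(polyOverP qE).
Qed.

Lemma in_pringV y : in_pring E s y -> in_pring E s y^-1.
Proof.
move=> Ey; have [y0|y_neq0] := eqVneq y 0; first by rewrite y0 invr0 -y0.
have Dp : p = p.-1.+1 by rewrite prednK ?prime_gt0.
have -> : y^-1 = y ^+ p.-1 * y^-1 ^+ p.
  by rewrite exprVn {2}Dp exprS invfM mulrCA divff ?expf_neq0 // mulr1.
apply: in_pringM; first exact: in_pringX.
by apply: in_pring_Frobenius; rewrite rpredV (in_pring_mem Ey).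
Qed.
End Pring.

Lemma pgenerator_adjoin (E : {subfield K}) (s u : K) :
  pgenerator E s -> u ^+ p = s -> pgenerator <<E; u>>%AS u.
Proof.
move=> genE us y /Fadjoin_polyP[f fE ->]; rewrite horner_coef.
apply: in_pring_sum => i _; apply: in_pringM; last exact/in_pringX/in_pring_gen.
have [q qE ->] := genE _ (polyOverP fE i).
rewrite -us -[u ^+ p]pFrobenius_autE horner_map /= pFrobenius_autE.
by apply: in_pring_Frobenius; rewrite mempx_Fadjoin.
Qed.

Lemma exists_pth_root_notin (E : {subfield K}) (s x : K) :
  s \in E -> pgenerator E s -> x \notin E -> x ^+ p \in E ->
  exists2 u, u ^+ p = s & u \notin E.
Proof.
move=> sE genE xE xpE; have [q qE Dxp] := genE _ xpE.
set P := 'X^p - s%:P; set m := q %% P.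
have mE : m \is a polyOver E.
  by rewrite modp_polyOver // rpredB ?rpredX ?polyOverX ?polyOverC.
have Dm : (map_poly frob m).[s] = x ^+ p.
  rewrite map_modp Dxp map_Frobenius_XnsubC.
  set Q := map_poly frob q; rewrite {2}(divp_eq Q (('X - s%:P) ^+ p)) hornerD hornerM.
  by rewrite horner_exp hornerXsubC subrr expr0n gtn_eqF ?prime_gt0 // mulr0 add0r.
have [u us] : exists u, u ^+ p = s.
  apply: (pth_root_of_Frobenius_root (g := m - x%:P)).
  - by apply: contraNneq xE => /subr0_eq Dmx; rewrite -polyOverC -Dmx.
  - have size_P : size P = p.+1 by rewrite size_XnsubC ?prime_gt0.
    rewrite (leq_trans (size_add _ _)) // geq_max size_opp size_polyC.
    rewrite (leq_trans (leq_b1 _)) ?prime_gt0 // andbT -ltnS -size_P ltn_modp.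
    by rewrite -size_poly_eq0 size_P.
  - by rewrite /root rmorphB /= map_polyC hornerD hornerN hornerC Dm subrr.
exists u => //; apply: contra xE => uE.
move: Dxp; rewrite -us -[u ^+ p]pFrobenius_autE horner_map -pFrobenius_autE.
by move/fmorph_inj ->; apply: rpred_horner.
Qed.

Lemma exists_notin_expr_p (E : {vspace K}) (y : K) (e : nat) :
  y \notin E -> y ^+ (p ^ e) \in E -> exists2 x, x \notin E & x ^+ p \in E.
Proof.
elim: e y => [|e IHe] y yE; first by rewrite expn0 expr1 (negPf yE).
have [ypE|ypE] := boolP (y ^+ p \in E); first by exists y.
by rewrite expnS exprM; apply: IHe.
Qed.

Lemma purely_inseparable_pgenerator (E : {subfield K}) (s : K) :
  (forall y, exists e, y ^+ (p ^ e) \in E) -> s \in E -> pgenerator E s ->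
  exists J s', \dim {:K} = (p ^ J * \dim E)%N /\ s' ^+ (p ^ J) = s.
Proof.
move: {2}_.+1 (ltnSn (\dim {:K} - \dim E)) => n.
elim: n E s => // n IHn E s lt_codim pinsep sE genE.
have [fullE | /subvPn[y _ yE]] := boolP (fullv <= E)%VS.
  exists 0%N, s; rewrite expn0 mul1n expr1; split=> //.
  by apply/eqP; rewrite eqn_leq !dimvS ?subvf.
have [e ye] := pinsep y.
have [x xE xpE] := exists_notin_expr_p yE ye.
have [u us uE] := exists_pth_root_notin sE genE xE xpE.
have dimEu : \dim <<E; u>> = (p * \dim E)%N.
  by rewrite dim_Fadjoin adjoin_degree_pchar // us.
have [||J [s' [dimK s'u]]] :=
  IHn <<E; u>>%AS u _ _ (memv_adjoin E u) (pgenerator_adjoin genE us).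
- have lt_E_Eu := ltn_Pmull (prime_gt1 p_pr) (adim_gt0 E).
  have := dimvS (subvf <<E; u>>%VS); rewrite dimEu => le_Eu_K.
  by apply: leq_trans (ltn_sub2l (leq_trans lt_E_Eu le_Eu_K) lt_E_Eu) _.
- by move=> z; have [e' ze'] := pinsep z; exists e'; apply: subvP (subv_adjoin E u) _ _.
exists J.+1, s'; split; first by rewrite dimK dimEu mulnA -expnSr.
by rewrite expnSr exprM s'u.
Qed.

Lemma pgenerator_separable (E : {subfield K}) (s : K) :
  (forall c : F0, in_pring E s c%:A) -> {in E, forall y, separable_element 1 y} ->
  pgenerator E s.
Proof.
move=> scalE sepE y yE; move: (sepE y yE).
rewrite (pcharf_p_separable _ _ 0 Hp) expn1 => /Fadjoin_polyP[f /polyOverP f1 ->].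
rewrite horner_coef; apply: in_pring_sum => i _.
have /vlineP[c ->] := f1 i.
by rewrite -exprM mulnC exprM; apply: in_pringM => //; apply/in_pring_Frobenius/rpredX.
Qed.
End PurelyInseparable.

Lemma pnat_pchar_expn (R : nzRingType) (p k : nat) :
  p \in [pchar R] -> [pchar R].-nat (p ^ k)%N.
Proof.
move=> Hp; rewrite (eq_pnat _ (pcharf_eq Hp)) pnatX pnat_id //.
exact: pcharf_prime Hp.
Qed.

(* [Hn] only serves to carry the ring morphism structure declared below. *)
Definition Frobenius_pow (F : fieldType) (n : nat) (Hn : [pchar F].-nat n) (x : F) :=
  x ^+ n.

Section FrobeniusPow.
Variables (F : fieldType) (n : nat) (Hn : [pchar F].-nat n).
Local Notation Frobenius_pow := (Frobenius_pow Hn).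

Lemma Frobenius_pow_is_zmod_morphism : zmod_morphism Frobenius_pow.
Proof. by move=> x y; rewrite /Frobenius_pow exprDn_pchar // exprNn_pchar. Qed.

Lemma Frobenius_pow_is_monoid_morphism : monoid_morphism Frobenius_pow.
Proof. by split=> [|x y]; rewrite /Frobenius_pow ?expr1n // exprMn. Qed.

HB.instance Definition _ := GRing.isZmodMorphism.Build F F Frobenius_pow
  Frobenius_pow_is_zmod_morphism.
HB.instance Definition _ := GRing.isMonoidMorphism.Build F F Frobenius_pow
  Frobenius_pow_is_monoid_morphism.
End FrobeniusPow.

Lemma frootK (Fq : finFieldType) (r : nat) (x : Fq) :
  [pchar Fq].-nat r -> Defs.froot r x ^+ r = x.
Proof.
move=> Hr; have /codomP[y ->] := injF_onto (fmorph_inj (Frobenius_pow Hr)) x.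
rewrite /Defs.froot; case: pickP => [z /eqP //|no_root].
by have := no_root y; rewrite /Frobenius_pow eqxx.
Qed.

Local Notation "x %:F" := (FracField.tofrac x).

Lemma frac_numden (R : idomainType) (a : {fraction R}) :
  exists n d : R, d != 0 /\ a = n%:F / d%:F.
Proof.
elim/quotW: a => x; exists \n_x, \d_x; split; first exact: denom_ratioP.
apply: (canRL (mulfK _)); first by rewrite tofrac_eq0 denom_ratioP.
change (FracField.mul (\pi_({fraction R})%qT x) (\d_x)%:F = (\n_x)%:F).
rewrite !piE; apply/eqmodP; rewrite /= FracField.equivfE /FracField.mulf.
by rewrite !numden_Ratio ?mulf_neq0 ?denom_ratioP ?oner_neq0 // !mulr1 mulrC.
Qed.

Section Carlitz.
Variables (Fq : finFieldType) (K : fieldExtType (FF Fq)).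

Definition cK_rmorph : {rmorphism Fq -> K} :=
  GRing.in_alg K \o @FracField.tofrac _ \o polyC.

Lemma pchar_K_Fq : [pchar K] =i [pchar Fq].
Proof. exact: fmorph_pchar cK_rmorph. Qed.

Lemma in_pring_scalar (p : nat) (Hp : p \in [pchar K]) (E : {subfield K})
    (c : FF Fq) :
  in_pring Hp E (tK K) c%:A.
Proof.
have HpF : [pchar Fq].-nat p by rewrite -(expn1 p) pnat_pchar_expn -?pchar_K_Fq.
have scalE (b : FF Fq) : b%:A \in E by rewrite rpredZ ?mem1v.
have polyE (P : {poly Fq}) : in_pring Hp E (tK K) (P%:F)%:A.
  rewrite -[P]coefK poly_def.
  change (in_pring Hp E (tK K) ((GRing.in_alg K \o @FracField.tofrac _)
    (\sum_(i < size P) P`_i *: 'X^i))).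
  rewrite rmorph_sum; apply: in_pring_sum => i _.
  rewrite -mul_polyC rmorphM rmorphXn; apply: in_pringM; last first.
    exact/in_pringX/in_pring_gen.
  change (in_pring Hp E (tK K) (cK_rmorph P`_i)).
  by rewrite -(frootK P`_i HpF) rmorphXn; apply/in_pring_Frobenius/scalE.
have [n [d [d_neq0 ->]]] := frac_numden c.
change (in_pring Hp E (tK K) (GRing.in_alg K (n%:F / d%:F))).
by rewrite fmorph_div; apply: in_pringM (polyE n) (in_pringV (scalE _) (polyE d)).
Qed.

Section Twist.
Variables (r : nat) (Hr : [pchar K].-nat r).

Lemma twistE (mu : {poly K}) : twist r mu = map_poly (Frobenius_pow Hr) mu.
Proof. by []. Qed.

Lemma twist_tmul (f g : {poly K}) : twist r (tmul f g) = tmul (twist r f) (twist r g).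
Proof.
rewrite !twistE /tmul !size_map_poly; apply/polyP => k.
rewrite coef_map !coef_poly /=; case: ifP => _; last by rewrite rmorph0.
rewrite rmorph_sum; apply: eq_bigr => i _.
by rewrite rmorphM rmorphXn !coef_map.
Qed.

Lemma twist_tpow (f : {poly K}) (n : nat) : twist r (tpow f n) = tpow (twist r f) n.
Proof.
elim: n => [|n IHn]; first by rewrite /tpow /= twistE rmorph1.
by rewrite /tpow !iterS -!/(tpow _ _) twist_tmul IHn.
Qed.

Lemma twist_drin (phi : {poly K}) (b : {poly Fq}) :
  twist r (drin phi b) = \sum_(n < size b) cK K b`_n ^+ r *: tpow (twist r phi) n.
Proof.
rewrite /drin twistE rmorph_sum; apply: eq_bigr => i _.
rewrite -twist_tpow twistE; apply/polyP => j.
by rewrite !(coefZ, coef_map) /= rmorphM.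
Qed.

Lemma teval_twist (L : fieldType) (iota : {rmorphism K -> L}) (mu : {poly K}) (x : L) :
  teval iota (twist r mu) (x ^+ r) = teval iota mu x ^+ r.
Proof.
have HrL : [pchar L].-nat r by rewrite (eq_pnat _ (fmorph_pchar iota)).
rewrite -[RHS]/(Frobenius_pow HrL (teval iota mu x)).
rewrite /teval twistE size_map_poly rmorph_sum.
apply: eq_bigr => i _.
by rewrite coef_map /= /Frobenius_pow rmorphXn exprMn exprAC.
Qed.
End Twist.

Lemma size_hat (r : nat) (a : {poly Fq}) : [pchar Fq].-nat r -> size (hat r a) = size a.
Proof.
move=> Hr; have r_gt0 : (0 < r)%N by case/andP: Hr.
have [->|a_neq0] := eqVneq a 0.
  by rewrite /hat size_poly0 poly_def big_ord0 size_poly0.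
apply: size_poly_eq; apply: contra_neq a_neq0 => lead0.
apply/eqP; rewrite -lead_coef_eq0 lead_coefE -(frootK a`_(size a).-1 Hr) lead0.
by rewrite expr0n gtn_eqF.
Qed.

Lemma twist_drin_hat (r : nat) (s : K) (a : {poly Fq}) :
  [pchar Fq].-nat r -> s ^+ r = tK K ->
  twist r (drin (s%:P + tau K) (hat r a)) = Carlitz K a.
Proof.
move=> HrF st; have HrK : [pchar K].-nat r by rewrite (eq_pnat _ pchar_K_Fq).
rewrite (twist_drin HrK) /Carlitz /drin size_hat //.
have -> : twist r (s%:P + tau K) = (tK K)%:P + tau K.
  by rewrite (twistE HrK) rmorphD /= map_polyC /tau map_polyX /= /Frobenius_pow st.
apply: eq_bigr => n _; congr (_ *: _).
by rewrite /hat coef_poly ltn_ord -[cK K _]/(cK_rmorph _) -rmorphXn frootK.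
Qed.
End Carlitz.

Theorem lemma5p8 (Fq : finFieldType) (K : fieldExtType (FF Fq))
  (Ks : {subfield K})
  (hKs : forall x : K, (x \in Ks) = separable_element 1%VS x)
  (L : fieldType) (iota : {rmorphism K -> L})
  (hL : is_separable_closure iota)
  (r : nat) (hr2 : (2 <= r)%N) (hr : (r %| \dim_Ks (fullv : {vspace K}))%N) :
  (exists s : K, s ^+ r = tK K) /\
  forall s : K, s ^+ r = tK K ->
    (forall a : {poly Fq},
        twist r (drin (s%:P + tau K) (hat r a)) = Carlitz K a) /\
    (forall (a : {poly Fq}) (lam : L),
        teval iota (drin (s%:P + tau K) (hat r a)) lam = 0 ->
        exists! delta : L,
          teval iota (Carlitz K a) delta = 0 /\ lam ^+ r = delta).
Proof.
have [p p_pr HpF] := finPcharP Fq.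
have HpK : p \in [pchar K] by rewrite pchar_K_Fq.
have [J [s' [dimK s't]]] :
    exists J s', \dim {:K} = (p ^ J * \dim Ks)%N /\ s' ^+ (p ^ J) = tK K.
  apply: purely_inseparable_pgenerator.
  - move=> y; have [n /andP[Hn sep_yn]] := separable_exponent_pchar 1 y.
    have [e Dn] : {e | n = (p ^ e)%N}.
      by apply: p_natP; rewrite -(eq_pnat _ (pcharf_eq HpK)).
    by exists e; rewrite hKs -Dn.
  - by rewrite rpredZ ?mem1v.
  - apply: pgenerator_separable => [c|y]; first exact: in_pring_scalar.
    by rewrite hKs.
move: hr; rewrite dimK mulnK ?adim_gt0 // => /(dvdn_pfactor _ _ p_pr)[k le_kJ Dr].
have HrF : [pchar Fq].-nat r by rewrite Dr pnat_pchar_expn.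
have HrK : [pchar K].-nat r by rewrite Dr pnat_pchar_expn.
split; first by exists (s' ^+ (p ^ (J - k))); rewrite -exprM Dr -expnD subnK.
move=> s st; have C'_twist a := twist_drin_hat a HrF st.
split=> // a lam lam0; exists (lam ^+ r); split=> [|_ [] //].
by rewrite -C'_twist (teval_twist HrK) lam0 expr0n gtn_eqF ?(ltnW hr2).
Qed.
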